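(* Let $n>1$ be an integer with prime factorization $n=\prod_{i=1}^{\ell}p_i^{a_i}$, where $p_1<p_2<\cdots<p_\ell$ are primes, each $a_i\ge1$, and $a_\ell=1$. Suppose that \[ p_i-1=\prod_{j=1}^{i-1}p_j^{a_j}\quad\text{for }1\le i<\ell, \] and that $p_\ell+1=n/p_\ell$. Then $n$ is a prime power Giuga number.
   Context: A prime power Giuga number is a composite positive integer $n$ such that $\sum_{p^k\mid n}\frac{1}{p^k}-\frac1n$ is a positive integer, where the sum ranges over all prime powers $p^k$ ($p$ prime, $k\ge1$) dividing $n$. *)

From HB Require Import structures.
From mathcomp Require Import all_boot all_order all_algebra.
Set Implicit Arguments. Unset Strict Implicit. Unset Printing Implicit Defensive.
Import Order.TTheory GRing.Theory Num.Theory.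

Definition is_prime_power (d : nat) : bool :=
  [exists p : 'I_d.+1, exists k : 'I_d.+1,
     [&& prime p, (0 < k)%N & d == (p : nat) ^ (k : nat)]].

Definition giuga_sum (n : nat) : rat :=
  (\sum_(d <- divisors n | is_prime_power d) (d%:R)^-1 - (n%:R)^-1)%R.

Definition prime_power_giuga (n : nat) : Prop :=
  [/\ (1 < n)%N, ~~ prime n & exists m : nat, (0 < m)%N /\ giuga_sum n = (m%:R : rat)%R].

From mathcomp Require Import all_boot all_order all_algebra.
From mathcomp Require Import zify ring.
Set Implicit Arguments. Unset Strict Implicit. Unset Printing Implicit Defensive.
Import Order.TTheory GRing.Theory Num.Theory.

(* Write P_i for the product of the p_j ^ a_j with j < i, so that p_i = P_i + 1
   for i < l and n = P_l * p_l.  Grouping the prime powers dividing n by their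
   prime, p_i (i < l) contributes the geometric sum of (P_i + 1)^-k for
   1 <= k <= a_i, which is 1/P_i - 1/P_(i+1); these telescope to 1 - 1/P_l.
   The prime p_l contributes 1/p_l, and since P_l = p_l + 1,
   1 - 1/P_l + 1/p_l - 1/(P_l * p_l) = 1. *)

Lemma is_prime_powerP d :
  reflect (exists q k, [/\ prime q, (0 < k)%N & d = q ^ k]) (is_prime_power d).
Proof.
apply: (iffP existsP) => [[q /existsP[k /and3P[pq k0 /eqP->]]]|[q [k [pq k0 ->]]]].
  by exists (q : nat), (k : nat).
have q_le : (q <= q ^ k)%N by have := leq_pexp2l (prime_gt0 pq) k0; rewrite expn1.
have k_lt : (k < q ^ k)%N by rewrite ltn_expl ?prime_gt1.
exists (inord q); apply/existsP; exists (inord k).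
by rewrite !inordK ?pq ?k0 ?eqxx // ltnS // ltnW.
Qed.

Lemma prime_power_divisors_uniq n :
  uniq [seq q ^ k | q <- primes n, k <- index_iota 1 (logn q n).+1].
Proof.
apply: allpairs_uniq_dep => [|q _|]; rewrite ?primes_uniq ?iota_uniq //.
move=> u v /allpairsPdep[q [k [qn km ->]]] /allpairsPdep[r [m [rn mr ->]]] /= qr.
have pq : prime q by move: qn; rewrite mem_primes => /andP[].
have pr : prime r by move: rn; rewrite mem_primes => /andP[].
move: km mr; rewrite !mem_index_iota => /andP[k0 _] /andP[m0 _].
have /eqP eq_qr : q == r.
  have : (q %| r ^ m)%N by rewrite -qr dvdn_exp.
  by rewrite Euclid_dvdX // dvdn_prime2 // => /andP[].
move: qr; rewrite {}eq_qr => /eqP; rewrite eqn_exp2l ?prime_gt1 // => /eqP-> //.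
Qed.

Lemma mem_prime_power_divisors n d : (0 < n)%N ->
  (d \in [seq q ^ k | q <- primes n, k <- index_iota 1 (logn q n).+1])
    = is_prime_power d && (d \in divisors n).
Proof.
move=> n0; rewrite -dvdn_divisors //; apply/allpairsPdep/andP.
  move=> [q [k [qn]]]; rewrite mem_index_iota ltnS => /andP[k0 kn] ->.
  have pq : prime q by move: qn; rewrite mem_primes => /andP[].
  by split; [apply/is_prime_powerP; exists q, k | rewrite pfactor_dvdn].
move=> [/is_prime_powerP[q [k [pq k0 ->]]]]; rewrite pfactor_dvdn // => kn.
exists q, k; rewrite mem_index_iota ltnS k0 kn -logn_gt0; split => //.
exact: leq_trans kn.
Qed.

Lemma sum_prime_power_divisors (R : nmodType) n (F : nat -> R) : (0 < n)%N ->
  (\sum_(d <- divisors n | is_prime_power d) F d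
    = \sum_(q <- primes n) \sum_(1 <= k < (logn q n).+1) F (q ^ k)%N)%R.
Proof.
move=> n0; rewrite -big_filter -big_allpairs_dep; apply: perm_big.
apply: uniq_perm; rewrite ?filter_uniq ?divisors_uniq ?prime_power_divisors_uniq //.
by move=> d; rewrite mem_filter mem_prime_power_divisors.
Qed.

Lemma logn_prod I (r : seq I) (P : pred I) (F : I -> nat) q :
  (forall i, P i -> 0 < F i)%N ->
  logn q (\prod_(i <- r | P i) F i) = (\sum_(i <- r | P i) logn q (F i))%N.
Proof.
move=> F_gt0.
suff /andP[_ /eqP//] : (0 < \prod_(i <- r | P i) F i)%N &&
  (logn q (\prod_(i <- r | P i) F i) == \sum_(i <- r | P i) logn q (F i)).
apply: (big_rec2 (fun m s => (0 < m)%N && (logn q m == s))) => [|i m s Pi].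
  by rewrite logn1.
case/andP=> m_gt0 /eqP<-; have Fi_gt0 := F_gt0 i Pi.
by rewrite muln_gt0 Fi_gt0 m_gt0 lognM // eqxx.
Qed.

Section PrimeFactorization.

Variables (l : nat) (p a : nat -> nat).
Hypothesis p_prime : forall i, (1 <= i <= l)%N -> prime (p i).
Hypothesis p_incr :
  forall i j, (1 <= i)%N -> (i < j)%N -> (j <= l)%N -> (p i < p j)%N.
Hypothesis a_gt0 : forall i, (1 <= i <= l)%N -> (1 <= a i)%N.

Let n := (\prod_(1 <= i < l.+1) p i ^ a i)%N.

Lemma pfactor_prime i : i \in index_iota 1 l.+1 -> prime (p i).
Proof. by rewrite mem_index_iota ltnS => /p_prime. Qed.

Lemma pfactor_inj : {in index_iota 1 l.+1 &, injective p}.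
Proof.
move=> i j; rewrite !mem_index_iota !ltnS => /andP[i1 il] /andP[j1 jl] pij.
case: (ltngtP i j) => // [ij|ji].
  by have := p_incr i1 ij jl; rewrite pij ltnn.
by have := p_incr j1 ji il; rewrite pij ltnn.
Qed.

Lemma pfactor_prod_gt0 : (0 < n)%N.
Proof.
rewrite /n big_seq_cond prodn_cond_gt0 // => i; rewrite andbT.
by move=> /pfactor_prime/prime_gt0 p_gt0; rewrite expn_gt0 p_gt0.
Qed.

Lemma logn_pfactor_prod i : (1 <= i <= l)%N -> logn (p i) n = a i.
Proof.
move=> il; have i_in : i \in index_iota 1 l.+1 by rewrite mem_index_iota ltnS.
rewrite /n big_seq logn_prod => [|j /pfactor_prime/prime_gt0 pj]; last first.
  by rewrite expn_gt0 pj.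
rewrite -big_seq (bigD1_seq i) ?iota_uniq //= big1_seq => [|j /andP[ji j_in]].
  by rewrite lognX logn_prime ?pfactor_prime // eqxx muln1 addn0.
rewrite lognX logn_prime ?pfactor_prime //; case: eqP => [pij|]; last first.
  by rewrite muln0.
by rewrite (pfactor_inj i_in j_in pij) eqxx in ji.
Qed.

Lemma primes_pfactor_prod : perm_eq (primes n) [seq p i | i <- index_iota 1 l.+1].
Proof.
apply: uniq_perm; first exact: primes_uniq.
  by rewrite (map_inj_in_uniq pfactor_inj) iota_uniq.
move=> q; rewrite mem_primes pfactor_prod_gt0 /=.
apply/andP/mapP => [[q_prime]|[i i_in ->]].
  rewrite /n Euclid_dvd_prod // big_has => /hasP[i i_in].
  rewrite Euclid_dvdX // => /andP[q_pi _]; exists i => //.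
  by apply/eqP; rewrite -dvdn_prime2 ?pfactor_prime.
split; first exact: pfactor_prime.
move: i_in; rewrite mem_index_iota ltnS => il.
rewrite -{1}(expn1 (p i)) pfactor_dvdn ?pfactor_prod_gt0 ?p_prime //.
by rewrite logn_pfactor_prod ?a_gt0.
Qed.

Lemma sum_prime_power_divisors_pfactor_prod (R : nmodType) (F : nat -> R) :
  (\sum_(d <- divisors n | is_prime_power d) F d
    = \sum_(1 <= i < l.+1) \sum_(1 <= k < (a i).+1) F (p i ^ k)%N)%R.
Proof.
rewrite sum_prime_power_divisors ?pfactor_prod_gt0 //.
rewrite (perm_big _ primes_pfactor_prod) big_map.
apply: eq_big_seq => i; rewrite mem_index_iota ltnS => il.
by rewrite logn_pfactor_prod.
Qed.

End PrimeFactorization.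

Local Open Scope ring_scope.

Lemma sum_inv_exprS (F : fieldType) (x : F) b : x != 0 -> x + 1 != 0 ->
  \sum_(1 <= k < b.+1) ((x + 1) ^+ k)^-1 = x^-1 - (x * (x + 1) ^+ b)^-1.
Proof.
move=> x_neq0 x1_neq0; elim: b => [|b IH].
  by rewrite big_geq // expr0 mulr1 subrr.
have x1b_neq0 : (x + 1) ^+ b != 0 by rewrite expf_neq0.
rewrite big_nat_recr //= IH exprS.
by field; rewrite x_neq0 x1_neq0 x1b_neq0.
Qed.

Definition prefix_prod (p a : nat -> nat) i := (\prod_(1 <= j < i) p j ^ a j)%N.

Section Telescope.

Variables (l : nat) (p a : nat -> nat).
Local Notation P := (prefix_prod p a).
Hypothesis p_succ : forall i, (1 <= i)%N -> (i < l)%N -> p i = (P i).+1.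

Lemma prefix_prod_gt0 i : (i <= l)%N -> (0 < P i)%N.
Proof.
move=> il; rewrite /prefix_prod big_seq_cond prodn_cond_gt0 // => j.
rewrite andbT mem_index_iota => /andP[j1 ji].
by rewrite expn_gt0 p_succ ?(leq_trans ji il).
Qed.

Lemma prefix_prodS i : (0 < i)%N -> P i.+1 = (P i * p i ^ a i)%N.
Proof. by move=> i_gt0; rewrite /prefix_prod big_nat_recr. Qed.

Lemma sum_inv_pfactor_telescope (R : numFieldType) : (1 <= l)%N ->
  \sum_(1 <= i < l) \sum_(1 <= k < (a i).+1) ((p i ^ k)%N%:R : R)^-1
    = 1 - (P l)%:R^-1.
Proof.
move=> l_gt0; rewrite (telescope_sumr_eq (fun i => - (P i)%:R^-1)) // => [|i].
  by rewrite [P 1]/prefix_prod big_geq // invr1 opprK addrC.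
move=> /andP[i1 il]; have Pi_gt0 : (0 < P i)%N := prefix_prod_gt0 (ltnW il).
rewrite opprK addrC prefix_prodS // p_succ // natrM natrX -natr1.
under eq_bigr do rewrite natrX -natr1.
by apply: sum_inv_exprS; rewrite ?natr1 pnatr_eq0 -lt0n.
Qed.

End Telescope.

Theorem lemma4 (n l : nat) (p a : nat -> nat) :
  (1 < n)%N ->
  n = (\prod_(1 <= i < l.+1) p i ^ a i)%N ->
  (forall i, (1 <= i <= l)%N -> prime (p i)) ->
  (forall i j, (1 <= i)%N -> (i < j)%N -> (j <= l)%N -> (p i < p j)%N) ->
  (forall i, (1 <= i <= l)%N -> (1 <= a i)%N) ->
  a l = 1%N ->
  (forall i, (1 <= i)%N -> (i < l)%N ->
     (p i - 1 = \prod_(1 <= j < i) p j ^ a j)%N) ->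
  (p l + 1 = n %/ p l)%N ->
  prime_power_giuga n.
Proof.
move=> n_gt1 n_def p_prime p_incr a_gt0 a_l p_pred p_last.
have l_gt0 : (0 < l)%N.
  by case: (posnP l) => // l0; move: n_gt1; rewrite n_def l0 big_geq.
have pl_prime : prime (p l) by rewrite p_prime // l_gt0 /=.
have pl_gt1 := prime_gt1 pl_prime.
have p_succ i : (1 <= i)%N -> (i < l)%N -> p i = (prefix_prod p a i).+1.
  move=> i1 il; rewrite /prefix_prod -p_pred // subn1 prednK // prime_gt0 //.
  by rewrite p_prime // i1 ltnW.
have n_eq : n = (prefix_prod p a l * p l)%N.
  by rewrite n_def /prefix_prod big_nat_recr //= a_l expn1.
have Pl : prefix_prod p a l = (p l).+1.
  by rewrite -addn1 p_last n_eq mulnK // prime_gt0.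
split => //.
  apply/negP => /primeP[_ /(_ (p l))]; rewrite n_eq dvdn_mull // Pl.
  by move=> /(_ isT) /orP[] /eqP; nia.
exists 1%N; split => //.
rewrite /giuga_sum n_def sum_prime_power_divisors_pfactor_prod // -n_def.
rewrite big_nat_recr //= a_l big_nat1 expn1 sum_inv_pfactor_telescope //.
rewrite n_eq Pl natrM -natr1.
have pl_neq0 : (p l)%:R != 0 :> rat by rewrite pnatr_eq0 -lt0n prime_gt0.
have pl1_neq0 : (p l)%:R + 1 != 0 :> rat by rewrite natr1 pnatr_eq0.
by field; rewrite pl_neq0 pl1_neq0.
Qed.
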